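(* Consider the normalised two-player, two-market Cournot game with per-period utility $u(x,a)=-2x(x+a)$ for a player playing $x$ against an opponent playing $a$. Let player 2's initial strategy be $a_0\in[-1,1]$. The players update alternately by myopic best response (a player facing opponent strategy $a$ switches to $-a/2$): at time $t=0$ player 1 updates, at $t=1$ player 2 updates, at $t=2$ player 1 updates, and so on. Let $u_t$ denote player 1's one-period utility at time $t$, evaluated at both players' strategies after the update at time $t$, and let $$g=u(-a_0/2,a_0)-u(-a_0,a_0)\ \ (\ge 0)$$ be the utility gained at the first move by the myopic best response relative to the equilibrium-mimicking response $-a_0$ (which yields utility $0$). Then $$\sum_{t=0}^{\infty}u_t=\frac{8g}{15},$$ which is strictly positive whenever $a_0\neq 0$.
   Context: Two players each have one unit of a homogeneous good (zero production and transportation cost) to split between two markets with inverse-linear demand. Strategies are normalised to numbers in $[-1,1]$ with $0$ the unique Cournot equilibrium split, and the normalised one-period utility (relative to the equilibrium utility, which is normalised to $0$) of a player playing $x$ against an opponent playing $a$ is $u(x,a)=-2x(x+a)$. An equilibrium-mimicking strategy profile is one in which every market receives the same total supply as it would in equilibrium; against opponent strategy $a_0$ this corresponds to playing $-a_0$, giving utility $0$. The myopic best response to $a$ is the maximiser of $u(\cdot,a)$, namely $-a/2$. *)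

From Stdlib Require Import Reals.
From Coquelicot Require Import Coquelicot.
Open Scope R_scope.

Definition u (x a : R) : R := -2 * x * (x + a).

(* Myopic best response to opponent strategy a (the maximiser of u(.,a)). *)
Definition best_response (a : R) : R := - a / 2.

(* Strategy profile (player 1's strategy, player 2's strategy) AFTER the
   update at time t, starting from the initial profile (x_init, a0). *)
Fixpoint profile (x_init a0 : R) (t : nat) : R * R :=
  match t with
  | O => (best_response a0, a0)
  | S t' =>
      let p := profile x_init a0 t' in
      if Nat.even t
      then (best_response (snd p), snd p)
      else (fst p, best_response (fst p))
  end.

Definition u1 (x_init a0 : R) (t : nat) : R :=
  let p := profile x_init a0 t in u (fst p) (snd p).

Definition gain (a0 : R) : R := u (best_response a0) a0 - u (- a0) a0.

(** Best responses alternately halve and negate the opponent's strategy, so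
    after the first move the profile at time 2k is (-a0/2, a0) 4^-k and at
    time 2k+1 it is (-a0/2, a0/4) 4^-k.  Hence player 1's utility is
    u_n = g (3/2 (-1/4)^n - 1/2 (1/4)^n) with g = a0^2/2, and summing the
    two geometric series gives g (6/5 - 2/3) = 8g/15. *)
From Stdlib Require Import Reals Lra Lia Psatz.
From Coquelicot Require Import Coquelicot.
Open Scope R_scope.

Lemma gain_sqr (a : R) : gain a = a ^ 2 / 2.
Proof. unfold gain, u, best_response. field. Qed.

Lemma is_series_geom_scal (c q : R) :
  Rabs q < 1 -> is_series (fun n => c * q ^ n) (c / (1 - q)).
Proof.
  intro Hq. apply (is_series_scal_l (K := R_AbsRing) (V := R_NormedModule)).
  now apply is_series_geom.
Qed.

Section Alternating_best_response.

Variables x_init a0 : R.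

Notation profile := (profile x_init a0).

Lemma profile_odd_step k :
  profile (S (2 * k)) =
  (fst (profile (2 * k)), best_response (fst (profile (2 * k)))).
Proof.
  change (profile (S (2 * k))) with
    (let p := profile (2 * k) in
     if Nat.even (S (2 * k)) then (best_response (snd p), snd p)
     else (fst p, best_response (fst p))).
  now rewrite Nat.even_succ, Nat.odd_mul.
Qed.

Lemma profile_even_step k :
  profile (2 * S k) =
  (best_response (snd (profile (S (2 * k)))), snd (profile (S (2 * k)))).
Proof.
  replace (2 * S k)%nat with (S (S (2 * k))) by lia.
  change (profile (S (S (2 * k)))) with
    (let p := profile (S (2 * k)) in
     if Nat.even (S (S (2 * k))) then (best_response (snd p), snd p)
     else (fst p, best_response (fst p))).
  now rewrite Nat.even_succ_succ, Nat.even_mul.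
Qed.

Lemma profile_even k :
  profile (2 * k) = (- a0 / 2 * (/ 4) ^ k, a0 * (/ 4) ^ k).
Proof.
  induction k as [|k IH].
  - cbn. unfold best_response. f_equal; field.
  - rewrite profile_even_step, profile_odd_step, IH. cbn [fst snd pow].
    unfold best_response. f_equal; field.
Qed.

Lemma profile_odd k :
  profile (S (2 * k)) = (- a0 / 2 * (/ 4) ^ k, a0 / 4 * (/ 4) ^ k).
Proof.
  rewrite profile_odd_step, profile_even. cbn [fst].
  unfold best_response. f_equal; field.
Qed.

Lemma u1_geom n :
  u1 x_init a0 n = gain a0 * (3 / 2 * (- / 4) ^ n - 1 / 2 * (/ 4) ^ n).
Proof.
  rewrite gain_sqr. unfold u1.
  destruct (Nat.Even_or_Odd n) as [[k ->] | [k ->]].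
  - rewrite profile_even, !pow_sqr. cbn [fst snd]. unfold u.
    replace (- / 4 * - / 4) with (/ 4 * / 4) by field.
    rewrite !Rpow_mult_distr. field.
  - replace (2 * k + 1)%nat with (S (2 * k)) by lia.
    rewrite profile_odd. cbn [fst snd pow]. rewrite !pow_sqr. unfold u.
    replace (- / 4 * - / 4) with (/ 4 * / 4) by field.
    rewrite !Rpow_mult_distr. field.
Qed.

End Alternating_best_response.

Lemma is_series_u1_coeff :
  is_series (fun n => 3 / 2 * (- / 4) ^ n - 1 / 2 * (/ 4) ^ n) (8 / 15).
Proof.
  replace (8 / 15) with (3 / 2 / (1 - - / 4) + - (1 / 2 / (1 - / 4))) by field.
  apply (is_series_minus (V := R_NormedModule)); apply is_series_geom_scal.
  - rewrite Rabs_Ropp, Rabs_pos_eq; lra.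
  - rewrite Rabs_pos_eq; lra.
Qed.

Theorem theorem4 (x_init a0 : R)
  (hx : -1 <= x_init <= 1) (ha : -1 <= a0 <= 1) :
  0 <= gain a0 /\
  is_series (u1 x_init a0) (8 * gain a0 / 15) /\
  (a0 <> 0 -> 0 < 8 * gain a0 / 15).
Proof.
  split; [|split].
  - rewrite gain_sqr. pose proof (pow2_ge_0 a0). lra.
  - apply (is_series_ext _ _ _ (fun n => eq_sym (u1_geom x_init a0 n))).
    replace (8 * gain a0 / 15) with (gain a0 * (8 / 15)) by field.
    apply (is_series_scal_l (K := R_AbsRing) (V := R_NormedModule)).
    exact is_series_u1_coeff.
  - intro Ha. rewrite gain_sqr.
    assert (0 < a0 * a0) by (apply Rsqr_pos_lt; exact Ha). nra.
Qed.
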